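(* Let $P \in S$ with $P \notin K$. Then the centralizer $C_S(P)$ is commutative.
   Context: Standing conventions: $K$ is a field, $R = K[y]$, $\sigma$ is a $K$-algebra endomorphism of $R$ with $\deg_y(\sigma(y)) > 1$, and $\delta$ is a $K$-linear $\sigma$-derivation of $R$ ($\delta(ab) = \sigma(a)\delta(b) + \delta(a)b$). $S = R[x;\sigma,\delta]$ is the Ore extension (polynomials $\sum r_i x^i$, $r_i\in R$, with $xr = \sigma(r)x + \delta(r)$). $C_S(P)$ is the set of elements of $S$ commuting with $P$. *)

From HB Require Import structures.
From mathcomp Require Import all_boot all_order all_algebra.
Set Implicit Arguments. Unset Strict Implicit. Unset Printing Implicit Defensive.
Import GRing.Theory.
Local Open Scope ring_scope.

(* Ore extension S = R[x; sigma, delta] with R = {poly K} = K[y].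
   Elements of S are represented (additively) by {poly {poly K}}:
   P = \sum_i r_i x^i  is the polynomial with coefficients r_i in R.
   Multiplication is the Ore product determined by x r = sigma(r) x + delta(r). *)

Section Ore.
Variable K : fieldType.
Variables (sigma delta : {poly K} -> {poly K}).

(* left multiplication by x:  x * (\sum r_i x^i) = \sum (sigma r_i x^{i+1} + delta r_i x^i) *)
Definition ore_mulx (q : {poly {poly K}}) : {poly {poly K}} :=
  map_poly sigma q * 'X + map_poly delta q.

Definition ore_mulXn (n : nat) (q : {poly {poly K}}) : {poly {poly K}} :=
  iter n ore_mulx q.

Definition ore_mul (p q : {poly {poly K}}) : {poly {poly K}} :=
  \sum_(i < size p) (p`_i)%:P * ore_mulXn i q.

Definition ore_centralizer (P : {poly {poly K}}) : pred {poly {poly K}} :=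
  fun Q => ore_mul P Q == ore_mul Q P.

End Ore.

(* Writing n for the x-degree of a nonconstant P, the proof runs:
   - S is a domain in which x-degrees add and lc(uv) = lc(u) sigma^(deg u)(lc v);
     since sigma multiplies y-degrees by d, comparing y-degrees of the leading
     coefficients in P u = u P shows that, for n > 0, two elements of C_S(P)
     of equal x-degree have proportional leading terms (centralizer_same_xsize).
   - For n = 0, P is a nonconstant element of R and the same comparison forces
     C_S(P) inside the commutative ring R (centralizer_comm_xdeg0).
   - For n > 0, pick Q in C_S(P) with gcd(deg Q, n) dividing every degree in
     C_S(P).  Every element of C_S(P) reduces modulo the commutative algebra
     K<P,Q> to x-degree below n deg Q; by a dimension count, each u in C_S(P)
     has a nonzero multiple f u in K<P,Q>, with f a polynomial in P.  Then
     f1 f2 (uv - vu) = (f1 u)(f2 v) - (f2 v)(f1 u) = 0, so uv = vu. *)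

From HB Require Import structures.
From mathcomp Require Import all_boot all_order all_algebra.
From mathcomp Require Import zify.
From Stdlib Require Import Classical.
Set Implicit Arguments. Unset Strict Implicit. Unset Printing Implicit Defensive.
Import GRing.Theory.

Lemma gcdn_mod_multiple m n : exists u, u * m = gcdn m n %[mod n].
Proof.
have [->|m_gt0] := posnP m; first by exists 0; rewrite gcd0n modnn mod0n.
by case: (egcdnP n m_gt0) => km kn def_km _; exists km; rewrite def_km modnMDl.
Qed.

Lemma linear_congruence_solvable m k n :
  gcdn m n %| k -> exists i, i * m = k %[mod n].
Proof.
move=> /dvdnP [t ->]; have [u def_u] := gcdn_mod_multiple m n.
by exists (t * u); rewrite -mulnA -modnMmr def_u modnMmr.
Qed.

Lemma gcd3_mod_combination m k n : 0 < n ->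
  exists a b, a * m + b * k = gcdn (gcdn m n) k %[mod n].
Proof.
move=> n_gt0; set g := gcdn m n.
have g_gt0 : 0 < g by rewrite gcdn_gt0 n_gt0 orbT.
have [u def_u] := gcdn_mod_multiple m n.
case: (egcdnP k g_gt0) => km kn def_km _.
exists (km * u), ((n - 1) * kn).
rewrite -mulnA -modnDml -modnMmr def_u modnMmr -/g def_km modnDml.
have -> : kn * k + gcdn g k + (n - 1) * kn * k = kn * k * n + gcdn g k by nia.
by rewrite modnMDl.
Qed.

Lemma affine_solution_unique a b1 b2 D M : 2 <= D ->
  a + b1 * D = b1 + a * M -> a + b2 * D = b2 + a * M -> b1 = b2.
Proof. by move=> D_ge2 E1 E2; nia. Qed.

Local Open Scope ring_scope.

Definition sigma_derivation (K : fieldType) (sigma delta : {poly K} -> {poly K}) :=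
  forall a b : {poly K}, delta (a * b) = sigma a * delta b + delta a * b.

Section OreRing.
Variable K : fieldType.
Variable sigma : {lrmorphism {poly K} -> {poly K}}.
Variable delta : {linear {poly K} -> {poly K}}.
Hypothesis delta_der : sigma_derivation sigma delta.

Local Notation mulx := (ore_mulx sigma delta).
Local Notation mulXn := (ore_mulXn sigma delta).
Local Notation omul := (ore_mul sigma delta).
Implicit Types p q r : {poly {poly K}}.

Lemma delta1 : delta 1 = 0.
Proof.
have := delta_der 1 1; rewrite !mulr1 rmorph1 mul1r.
by move/esym/(congr1 (fun z => z - delta 1)); rewrite subrr addrK.
Qed.

Lemma deltaC (c : K) : delta c%:P = 0.
Proof. by rewrite -alg_polyC linearZ /= delta1 scaler0. Qed.

Lemma sigmaC (c : K) : sigma c%:P = c%:P.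
Proof. by rewrite -alg_polyC linearZ /= rmorph1. Qed.

Lemma mulxD p q : mulx (p + q) = mulx p + mulx q.
Proof. by rewrite /ore_mulx !raddfD /= mulrDl addrACA. Qed.

Lemma mulx0 : mulx 0 = 0.
Proof. by rewrite /ore_mulx !raddf0 mul0r addr0. Qed.

Lemma mulxC a q : mulx (a%:P * q) = (sigma a)%:P * mulx q + (delta a)%:P * q.
Proof.
rewrite /ore_mulx mulrDr -addrA; congr (_ + _).
  by rewrite rmorphM /= map_polyC mulrA.
apply/polyP => i; rewrite !coefD !coefCM !coef_map /= coefCM delta_der.
by rewrite addrC.
Qed.

Lemma mulXnD n p q : mulXn n (p + q) = mulXn n p + mulXn n q.
Proof. by elim: n => //= n IH; rewrite IH mulxD. Qed.

Lemma mulXnSr n p : mulXn n.+1 p = mulXn n (mulx p).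
Proof. by rewrite /ore_mulXn iterSr. Qed.

Lemma mulXnS n p : mulXn n.+1 p = mulx (mulXn n p).
Proof. by []. Qed.

Lemma ore_mulE N p q : (size p <= N)%N ->
  omul p q = \sum_(i < N) (p`_i)%:P * mulXn i q.
Proof.
move=> hN; rewrite /ore_mul (big_ord_widen N (fun i => (p`_i)%:P * mulXn i q)) //.
rewrite big_mkcond /=; apply: eq_bigr => i _.
by case: ltnP => // hi; rewrite nth_default // mul0r.
Qed.

Lemma ore_mulDl p p' q : omul (p + p') q = omul p q + omul p' q.
Proof.
pose N := maxn (size (p + p')) (maxn (size p) (size p')).
have h1 : (size (p + p')%R <= N)%N by rewrite leq_maxl.
have h2 : (size p <= N)%N by rewrite (leq_trans _ (leq_maxr _ _)) // leq_maxl.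
have h3 : (size p' <= N)%N by rewrite (leq_trans _ (leq_maxr _ _)) // leq_maxr.
rewrite (ore_mulE _ h1) (ore_mulE _ h2) (ore_mulE _ h3) -big_split /=.
by apply: eq_bigr => i _; rewrite coefD polyCD mulrDl.
Qed.

Lemma ore_mulDr p q q' : omul p (q + q') = omul p q + omul p q'.
Proof.
by rewrite /ore_mul -big_split /=; apply: eq_bigr => i _; rewrite mulXnD mulrDr.
Qed.

Lemma ore_mul0l q : omul 0 q = 0.
Proof. by rewrite /ore_mul size_poly0 big_ord0. Qed.

Lemma ore_mulC a q : omul a%:P q = a%:P * q.
Proof. by rewrite (@ore_mulE 1) ?size_polyC ?leq_b1 // big_ord1 coefC. Qed.

Lemma ore_mulCl a p q : omul (a%:P * p) q = a%:P * omul p q.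
Proof.
have hs : (size (a%:P * p)%R <= size p)%N by rewrite mul_polyC size_scale_leq.
rewrite (ore_mulE q hs) /ore_mul mulr_sumr; apply: eq_bigr => i _.
by rewrite coefCM polyCM mulrA.
Qed.

Lemma ore_mulX p q : omul (p * 'X) q = omul p (mulx q).
Proof.
rewrite (@ore_mulE (size p).+1); last first.
  by rewrite (leq_trans (size_polyMleq _ _)) // size_polyX addn2.
rewrite big_ord_recl coefMX eqxx mul0r add0r /ore_mul.
by apply: eq_bigr => i _; rewrite coefMX /= add0n -mulXnS mulXnSr.
Qed.

Lemma ore_mul_mulx p q : omul (mulx p) q = mulx (omul p q).
Proof.
rewrite {1}/ore_mulx ore_mulDl ore_mulX.
rewrite (@ore_mulE (size p) (map_poly sigma p)) ?size_poly //.
rewrite (@ore_mulE (size p) (map_poly delta p)) ?size_poly //.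
rewrite /ore_mul -big_split /=.
elim/big_rec2: _ => [|i y1 y2 _ ->]; first by rewrite mulx0.
by rewrite mulxD mulxC !coef_map /= -mulXnSr.
Qed.

Lemma ore_mulA p q r : omul p (omul q r) = omul (omul p q) r.
Proof.
elim/poly_ind: p q => [|p c IH] q; first by rewrite !ore_mul0l.
rewrite !(ore_mulDl (p * 'X) c%:P) !ore_mulX !ore_mulC ore_mulDl.
by rewrite -ore_mul_mulx IH ore_mulCl.
Qed.

Lemma ore_mul1l q : omul 1 q = q.
Proof. by rewrite -polyC1 ore_mulC mul1r. Qed.

Lemma mulXn1 i : mulXn i 1 = 'X^i.
Proof.
elim: i => [|i IH] //=; rewrite IH /ore_mulx map_polyXn /= -exprSr.
suff -> : map_poly delta 'X^i = 0 by rewrite addr0.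
apply/polyP => j; rewrite coef_map /= coefXn coef0.
by case: (_ == _); rewrite ?delta1 ?raddf0.
Qed.

Lemma ore_mul1r p : omul p 1 = p.
Proof.
rewrite /ore_mul; apply: etrans (coefK p); rewrite poly_def.
by apply: eq_bigr => i _; rewrite mulXn1 mul_polyC.
Qed.

(* The Ore extension as a ring; the type depends on the derivation law so that
   the ring structure, whose associativity needs that law, can be canonical. *)
Definition ore_ring (_ : sigma_derivation sigma delta) : Type := {poly {poly K}}.
Local Notation Ore := (ore_ring delta_der).
HB.instance Definition _ := GRing.Zmodule.on Ore.
HB.instance Definition _ := GRing.Zmodule_isNzRing.Build Ore
  ore_mulA ore_mul1l ore_mul1r ore_mulDl ore_mulDr (@oner_neq0 {poly {poly K}}).

End OreRing.

Lemma size_sub_same_lead (R : nzRingType) (p q : {poly R}) : p != 0 ->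
  size q = size p -> lead_coef q = lead_coef p -> (size (p - q)%R < size p)%N.
Proof.
move=> p_neq0 Esize Elead.
have := size_polyD p (- q); rewrite size_polyN Esize maxnn leq_eqVlt.
case/orP=> [/eqP Epq|//]; have : lead_coef (p - q) == 0.
  by rewrite lead_coefE Epq coefB -lead_coefE -Esize -lead_coefE Elead subrr.
rewrite lead_coef_eq0 => /eqP pq0; move: Epq; rewrite pq0 size_poly0.
by move/esym/eqP; rewrite size_poly_eq0 (negbTE p_neq0).
Qed.

Section OreDegree.
Variable K : fieldType.
Variable sigma : {lrmorphism {poly K} -> {poly K}}.
Variable delta : {linear {poly K} -> {poly K}}.
Hypothesis sigma_deg : (2 < size (sigma 'X))%N.

Local Notation mulx := (ore_mulx sigma delta).
Local Notation mulXn := (ore_mulXn sigma delta).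
Local Notation omul := (ore_mul sigma delta).
Local Notation d := (size (sigma 'X)).-1.
Implicit Types p q : {poly {poly K}}.

(* sigma is substitution of sigma(y) for y, hence multiplies y-degrees by d. *)
Lemma sigma_comp f : sigma f = f \Po sigma 'X.
Proof.
rewrite comp_polyE {1}(_ : f = \sum_(i < size f) f`_i *: 'X^i).
  by rewrite linear_sum; apply: eq_bigr => i _; rewrite linearZ /= rmorphXn.
by rewrite -poly_def coefK.
Qed.

Lemma sigma_neq0 f : f != 0 -> sigma f != 0.
Proof.
move=> f_neq0; rewrite sigma_comp -lead_coef_eq0 lead_coef_comp; last first.
  exact: ltn_trans sigma_deg.
rewrite mulf_neq0 ?lead_coef_eq0 // expf_neq0 // lead_coef_eq0.
by apply: contraTneq sigma_deg => ->; rewrite size_poly0.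
Qed.

Lemma size_sigma f : f != 0 -> size (sigma f) = ((size f).-1 * d).+1.
Proof.
move=> f_neq0; rewrite -(size_comp_poly f (sigma 'X)) -sigma_comp prednK //.
by rewrite size_poly_gt0 sigma_neq0.
Qed.

Definition sigma_iter n f := iter n sigma f.

Lemma sigma_iter_neq0 n f : f != 0 -> sigma_iter n f != 0.
Proof. by move=> f_neq0; elim: n => //= n IH; apply: sigma_neq0. Qed.

Lemma size_sigma_iter n f : f != 0 ->
  size (sigma_iter n f) = ((size f).-1 * d ^ n).+1.
Proof.
move=> f_neq0; elim: n => [|n IH]; first by rewrite muln1 prednK // size_poly_gt0.
by rewrite /sigma_iter iterS size_sigma ?sigma_iter_neq0 // IH /= expnSr mulnA.
Qed.

Lemma sigma_iterD n f g : sigma_iter n (f + g) = sigma_iter n f + sigma_iter n g.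
Proof. by elim: n => //= n IH; rewrite /sigma_iter /= -!/(sigma_iter n _) IH rmorphD. Qed.

Lemma sigma_iterN n f : sigma_iter n (- f) = - sigma_iter n f.
Proof. by elim: n => //= n IH; rewrite /sigma_iter /= -!/(sigma_iter n _) IH rmorphN. Qed.

Lemma sigma_iterZ n c f : sigma_iter n (c *: f) = c *: sigma_iter n f.
Proof. by elim: n => //= n IH; rewrite /sigma_iter /= -!/(sigma_iter n _) IH linearZ. Qed.

Lemma size_mulx q : q != 0 -> size (mulx q) = (size q).+1.
Proof.
move=> q_neq0; have hs : size (map_poly sigma q) = size q.
  by rewrite size_map_poly_id0 // sigma_neq0 ?lead_coef_eq0.
have hs0 : map_poly sigma q != 0 by rewrite -size_poly_eq0 hs size_poly_eq0.
by rewrite /ore_mulx size_polyDl size_mulX // hs // ltnS size_poly.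
Qed.

Lemma lead_mulx q : q != 0 -> lead_coef (mulx q) = sigma (lead_coef q).
Proof.
move=> q_neq0; have hl : sigma (lead_coef q) != 0 by rewrite sigma_neq0 ?lead_coef_eq0.
have hs : size (map_poly sigma q) = size q by rewrite size_map_poly_id0.
have hs0 : map_poly sigma q != 0 by rewrite -size_poly_eq0 hs size_poly_eq0.
rewrite /ore_mulx lead_coefDl ?lead_coefMX ?lead_coef_map_eq //.
by rewrite size_mulX // hs // ltnS size_poly.
Qed.

Lemma mulXn_neq0 n q : q != 0 -> mulXn n q != 0.
Proof.
move=> q_neq0; elim: n => //= n IH.
by rewrite -size_poly_eq0 size_mulx.
Qed.

Lemma size_mulXn n q : q != 0 -> size (mulXn n q) = (size q + n)%N.
Proof.
move=> q_neq0; elim: n => [|n IH]; first by rewrite addn0.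
by rewrite mulXnS size_mulx ?mulXn_neq0 // IH addnS.
Qed.

Lemma lead_mulXn n q : q != 0 -> lead_coef (mulXn n q) = sigma_iter n (lead_coef q).
Proof.
move=> q_neq0; elim: n => [|n IH] //.
by rewrite mulXnS lead_mulx ?mulXn_neq0 // IH.
Qed.

Lemma size_lower_terms N (c : nat -> {poly K}) q : q != 0 ->
  (size (\sum_(i < N) (c i)%:P * mulXn i q)%R < size q + N)%N.
Proof.
move=> q_neq0; elim: N => [|N IH]; first by rewrite big_ord0 size_poly0 addn0 size_poly_gt0.
rewrite big_ord_recr /= addnS ltnS; apply: leq_trans (size_polyD _ _) _.
rewrite geq_max (ltnW IH) mul_polyC (leq_trans (size_scale_leq _ _)) //.
by rewrite size_mulXn.
Qed.

Lemma size_ore_mul p q : p != 0 -> q != 0 ->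
  size (omul p q) = ((size p).-1 + size q)%N.
Proof.
move=> p_neq0 q_neq0; rewrite /ore_mul; have := size_poly_gt0 p; rewrite p_neq0.
case def_s: (size p) => [|k] // _; rewrite big_ord_recr /=.
have hlc : p`_k != 0 by rewrite -[k]/(k.+1.-1) -def_s -lead_coefE lead_coef_eq0.
rewrite addrC size_polyDl size_Cmul // size_mulXn //; first by rewrite addnC.
exact: (size_lower_terms k (fun i => p`_i)).
Qed.

Lemma lead_ore_mul p q : p != 0 -> q != 0 ->
  lead_coef (omul p q) = lead_coef p * sigma_iter (size p).-1 (lead_coef q).
Proof.
move=> p_neq0 q_neq0; rewrite /ore_mul; have := size_poly_gt0 p; rewrite p_neq0.
case def_s: (size p) => [|k] // _; rewrite big_ord_recr /=.
have hlk : p`_k = lead_coef p by rewrite lead_coefE def_s.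
have hlc : p`_k != 0 by rewrite hlk lead_coef_eq0.
rewrite addrC lead_coefDl; last first.
  by rewrite size_Cmul // size_mulXn // (size_lower_terms k (fun i => p`_i)).
by rewrite mul_polyC lead_coefZ lead_mulXn // hlk.
Qed.

Lemma ore_mul_neq0 p q : p != 0 -> q != 0 -> omul p q != 0.
Proof.
move=> p_neq0 q_neq0; rewrite -size_poly_eq0 size_ore_mul //.
by rewrite addn_eq0 size_poly_eq0 (negbTE q_neq0) andbF.
Qed.

End OreDegree.

Section Centralizer.
Variable K : fieldType.
Variable sigma : {lrmorphism {poly K} -> {poly K}}.
Variable delta : {linear {poly K} -> {poly K}}.
Hypothesis delta_der : sigma_derivation sigma delta.
Hypothesis sigma_deg : (2 < size (sigma 'X))%N.

Local Notation Ore := (ore_ring delta_der).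
Local Notation PP := {poly {poly K}}.
Local Notation d := (size (sigma 'X)).-1.
Local Notation sigma_iter := (sigma_iter sigma).

Definition xsize (u : Ore) := size (u : PP).
Definition xdeg (u : Ore) := (xsize u).-1.
Definition xlead (u : Ore) : {poly K} := lead_coef (u : PP).

Lemma xsize_eq0 (u : Ore) : (xsize u == 0%N) = (u == 0).
Proof. exact: size_poly_eq0. Qed.

Lemma xlead_eq0 (u : Ore) : (xlead u == 0) = (u == 0).
Proof. exact: lead_coef_eq0. Qed.

Lemma xlead_neq0 (u : Ore) : u != 0 -> xlead u != 0.
Proof. by rewrite xlead_eq0. Qed.

Lemma xsize_gt0 (u : Ore) : u != 0 -> (0 < xsize u)%N.
Proof. by rewrite lt0n xsize_eq0. Qed.

Lemma xsizeE (u : Ore) : u != 0 -> xsize u = (xdeg u).+1.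
Proof. by move=> u_neq0; rewrite prednK // xsize_gt0. Qed.

Lemma xsizeDl (u v : Ore) : (xsize v < xsize u)%N -> xsize (u + v) = xsize u.
Proof. exact: size_polyDl. Qed.

Lemma mulO_neq0 (u v : Ore) : u != 0 -> v != 0 -> u * v != 0.
Proof. exact: ore_mul_neq0. Qed.

Lemma expO_neq0 (u : Ore) k : u != 0 -> u ^+ k != 0.
Proof.
move=> u_neq0; elim: k => [|k IH]; first by rewrite expr0 oner_neq0.
by rewrite exprS mulO_neq0.
Qed.

Lemma xdegM (u v : Ore) : u != 0 -> v != 0 -> xdeg (u * v) = (xdeg u + xdeg v)%N.
Proof.
move=> u_neq0 v_neq0; rewrite /xdeg /xsize size_ore_mul //.
by rewrite -/(xsize v) xsizeE // addnS.
Qed.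

Lemma xdegX (u : Ore) k : u != 0 -> xdeg (u ^+ k) = (k * xdeg u)%N.
Proof.
move=> u_neq0; elim: k => [|k IH]; first by rewrite expr0 /xdeg /xsize size_poly1.
by rewrite exprS xdegM ?expO_neq0 // IH mulSn.
Qed.

Lemma xleadM (u v : Ore) : u != 0 -> v != 0 ->
  xlead (u * v) = xlead u * sigma_iter (xdeg u) (xlead v).
Proof. exact: lead_ore_mul. Qed.

Definition scal (c : K) : Ore := (c%:P)%:P.

Lemma scal_mull c (u : Ore) : scal c * u = (c%:P *: (u : PP) : PP).
Proof. by rewrite /scal -mul_polyC; apply: ore_mulC. Qed.

(* Scalars commute with x, since sigma fixes and delta kills them; hence
   scalars are central in S. *)
Lemma mulXn_scal n c (q : PP) :
  ore_mulXn sigma delta n ((c%:P)%:P * q) = (c%:P)%:P * ore_mulXn sigma delta n q.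
Proof.
elim: n => [|n IH] //; rewrite mulXnS IH mulxC //.
by rewrite sigmaC (deltaC delta_der) polyC0 mul0r addr0.
Qed.

Lemma scal_comm c (u : Ore) : u * scal c = scal c * u.
Proof.
change (ore_mul sigma delta u (scal c) = scal c * u).
rewrite scal_mull -mul_polyC -{2}[u : PP](ore_mul1r delta_der) /ore_mul mulr_sumr.
apply: eq_bigr => i _; rewrite /scal.
by rewrite -[X in ore_mulXn _ _ _ X](mulr1 ((c%:P)%:P : PP)) mulXn_scal mulrCA.
Qed.

Lemma scal_is_zmod_morphism : zmod_morphism scal.
Proof. by move=> a b; rewrite /scal !raddfB. Qed.

Lemma scal_is_monoid_morphism : monoid_morphism scal.
Proof.
split; first by rewrite /scal !polyC1.
by move=> a b; rewrite scal_mull /scal -mul_polyC !polyCM.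
Qed.

HB.instance Definition _ := GRing.isZmodMorphism.Build K Ore scal
  scal_is_zmod_morphism.
HB.instance Definition _ := GRing.isMonoidMorphism.Build K Ore scal
  scal_is_monoid_morphism.

Lemma xsize_scal c (u : Ore) : c != 0 -> xsize (scal c * u) = xsize u.
Proof. by move=> c_neq0; rewrite scal_mull /xsize size_scale // polyC_eq0. Qed.

Lemma d_ge2 : (2 <= d)%N.
Proof. by rewrite -ltnS prednK // (ltn_trans _ sigma_deg). Qed.

Lemma expd_ge2 k : (0 < k)%N -> (2 <= d ^ k)%N.
Proof.
case: k => // k _; rewrite expnS (leq_trans d_ge2) // leq_pmulr //.
by rewrite expn_gt0 (leq_trans _ d_ge2).
Qed.

Variable P : Ore.
Hypothesis P_nonconst : forall c : K, (P : PP) != (c%:P)%:P.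
Local Notation n := (xdeg P).

Definition centralizer : {pred Ore} := [pred u | P * u == u * P].

Lemma centralizer_subring_closed : subring_closed centralizer.
Proof.
split=> [|u v|u v]; rewrite !inE; first by rewrite mulr1 mul1r.
  by move=> /eqP Pu /eqP Pv; rewrite mulrBr mulrBl Pu Pv.
by move=> /eqP Pu /eqP Pv; rewrite mulrA Pu -mulrA Pv mulrA.
Qed.

HB.instance Definition _ := GRing.isSubringClosed.Build Ore centralizer
  centralizer_subring_closed.

Lemma centralizer_P : P \in centralizer.
Proof. by rewrite inE. Qed.

Lemma centralizer_scal c : scal c \in centralizer.
Proof. by rewrite inE scal_comm. Qed.

Lemma P_neq0 : P != 0.
Proof. by have := P_nonconst 0; rewrite !polyC0. Qed.

Lemma xleadP_neq0 : xlead P != 0.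
Proof. exact: xlead_neq0 P_neq0. Qed.

Lemma xlead_centralizer u : u \in centralizer -> u != 0 ->
  xlead P * sigma_iter n (xlead u) = xlead u * sigma_iter (xdeg u) (xlead P).
Proof. by move=> /eqP Pu u_neq0; rewrite -xleadM ?P_neq0 // Pu xleadM ?P_neq0. Qed.

Lemma twisted_eq_size m (f : {poly K}) : f != 0 ->
  xlead P * sigma_iter n f = f * sigma_iter m (xlead P) ->
  ((size (xlead P)).-1 + (size f).-1 * d ^ n
    = (size f).-1 + (size (xlead P)).-1 * d ^ m)%N.
Proof.
move=> f_neq0 /(congr1 (fun g : {poly K} => size g)).
rewrite !size_mul ?sigma_iter_neq0 ?xleadP_neq0 //.
rewrite !size_sigma_iter ?xleadP_neq0 //.
have := size_poly_gt0 f; rewrite f_neq0; case: (size f) => // k _.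
have := size_poly_gt0 (xlead P); rewrite xleadP_neq0; case: (size _) => // l _.
by rewrite !addnS => -[].
Qed.

(* For n > 0 all nonzero solutions of the twisted equation have the same size:
   (size f).-1 is determined by an equation a + b d^n = b + a d^m. *)
Lemma twisted_eq_same_size m (f g : {poly K}) : (0 < n)%N -> f != 0 -> g != 0 ->
  xlead P * sigma_iter n f = f * sigma_iter m (xlead P) ->
  xlead P * sigma_iter n g = g * sigma_iter m (xlead P) -> size f = size g.
Proof.
move=> n_gt0 f_neq0 g_neq0 Ef Eg.
have := affine_solution_unique (expd_ge2 n_gt0)
  (twisted_eq_size f_neq0 Ef) (twisted_eq_size g_neq0 Eg).
have := size_poly_gt0 f; have := size_poly_gt0 g.
by rewrite f_neq0 g_neq0; lia.
Qed.

Lemma twisted_eq_unique m (f g : {poly K}) : (0 < n)%N -> f != 0 -> g != 0 ->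
  xlead P * sigma_iter n f = f * sigma_iter m (xlead P) ->
  xlead P * sigma_iter n g = g * sigma_iter m (xlead P) ->
  exists2 c : K, c != 0 & f = c *: g.
Proof.
move=> n_gt0 f_neq0 g_neq0 Ef Eg.
pose c := lead_coef f / lead_coef g.
have c_neq0 : c != 0 by rewrite mulf_neq0 ?invr_eq0 ?lead_coef_eq0.
exists c => //; apply/eqP; rewrite -subr_eq0; apply/eqP.
pose r := f - c *: g.
have Er : xlead P * sigma_iter n r = r * sigma_iter m (xlead P).
  by rewrite sigma_iterD sigma_iterN sigma_iterZ mulrDr mulrN -scalerAr Ef Eg
    mulrDl mulNr scalerAl.
have r_lt : (size r < size f)%N.
  apply: size_sub_same_lead => //.
    by rewrite size_scale // (twisted_eq_same_size n_gt0 f_neq0 g_neq0 Ef Eg).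
  by rewrite lead_coefZ /c -mulrA mulVf ?mulr1 // lead_coef_eq0.
apply/eqP; apply: contraTT r_lt => r_neq0.
by rewrite (twisted_eq_same_size n_gt0 r_neq0 f_neq0 Er Ef) ltnn.
Qed.

Lemma centralizer_same_xsize (u v : Ore) : (0 < n)%N ->
  u \in centralizer -> v \in centralizer -> u != 0 -> v != 0 ->
  xsize u = xsize v -> exists c : K, (xsize (u - scal c * v)%R < xsize u)%N.
Proof.
move=> n_gt0 Cu Cv u_neq0 v_neq0 Euv.
have Ev := xlead_centralizer Cv v_neq0; rewrite /xdeg -Euv -/(xdeg u) in Ev.
have [c c_neq0 Eu] := twisted_eq_unique n_gt0 (xlead_neq0 u_neq0)
  (xlead_neq0 v_neq0) (xlead_centralizer Cu u_neq0) Ev.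
exists c; apply: size_sub_same_lead => //; rewrite scal_mull.
  by rewrite size_scale ?polyC_eq0.
by rewrite lead_coefZ -/(xlead u) Eu mul_polyC.
Qed.

Lemma centralizer_xdeg0 u : n = 0%N -> u \in centralizer -> (xsize u <= 1)%N.
Proof.
move=> n0 Cu; have [->|u_neq0] := eqVneq u 0; first by rewrite /xsize size_poly0.
have def_P : (P : PP) = (xlead P)%:P.
  have P_const : (xsize P <= 1)%N by rewrite xsizeE ?P_neq0 // n0.
  by rewrite [LHS]size1_polyC // /xlead lead_coefE -/(xsize P) xsizeE ?P_neq0 // n0.
have lcP_size : (2 <= size (xlead P))%N.
  rewrite ltnNge; apply: contra (P_nonconst (xlead P)`_0) => lcP_small.
  by rewrite {1}def_P -(size1_polyC lcP_small).
have := twisted_eq_size (xlead_neq0 u_neq0) (xlead_centralizer Cu u_neq0).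
rewrite n0 expn0 muln1 xsizeE // ltnS leqn0.
case: (xdeg u) => // m Esize; have := expd_ge2 (ltn0Sn m); move: Esize.
by rewrite addnC; nia.
Qed.

Lemma centralizer_comm_xdeg0 (u v : Ore) : n = 0%N ->
  u \in centralizer -> v \in centralizer -> u * v = v * u.
Proof.
move=> n0 Cu Cv.
rewrite (size1_polyC (centralizer_xdeg0 n0 Cu)) (size1_polyC (centralizer_xdeg0 n0 Cv)).
by rewrite /GRing.mul /= !ore_mulC mulrC.
Qed.

Section PositiveDegree.
Hypothesis n_gt0 : (0 < n)%N.

(* There is Q in C_S(P) such that gcd(deg Q, n) divides the x-degree of every
   nonzero element of C_S(P): take Q minimizing gcd(deg Q, n); otherwise some
   Q^a u^b would have a strictly smaller gcd. *)
Lemma degree_gcd_generator : exists2 Q, Q \in centralizer /\ Q != 0 &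
  forall u, u \in centralizer -> u != 0 -> (gcdn (xdeg Q) n %| xdeg u)%N.
Proof.
suff : forall g Q, Q \in centralizer -> Q != 0 -> (gcdn (xdeg Q) n <= g)%N ->
    exists2 Q, Q \in centralizer /\ Q != 0 &
      forall u, u \in centralizer -> u != 0 -> (gcdn (xdeg Q) n %| xdeg u)%N.
  move=> minimize; apply: (minimize n P centralizer_P P_neq0).
  by rewrite dvdn_leq ?dvdn_gcdr.
elim=> [|g IH] Q CQ Q_neq0 le_g.
  by move: le_g; rewrite leqNgt gcdn_gt0 n_gt0 orbT.
case: (classic (exists u, [/\ u \in centralizer, u != 0 &
    ~~ (gcdn (xdeg Q) n %| xdeg u)%N])) => [[u [Cu u_neq0 not_dvd]] | none]; last first.
  exists Q => // u Cu u_neq0; apply/negPn/negP => not_dvd.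
  by apply: none; exists u.
have [a [b Eab]] := gcd3_mod_combination (xdeg Q) (xdeg u) n_gt0.
set g0 := gcdn (xdeg Q) n in not_dvd Eab le_g.
set h := gcdn g0 (xdeg u) in Eab.
have Q'_neq0 : Q ^+ a * u ^+ b != 0 by rewrite mulO_neq0 ?expO_neq0.
apply: (IH _ _ Q'_neq0); first by rewrite rpredM ?rpredX.
have -> : gcdn (xdeg (Q ^+ a * u ^+ b)) n = h.
  rewrite xdegM ?expO_neq0 // !xdegX // -gcdn_modl Eab gcdn_modl.
  by apply/gcdn_idPl; rewrite (dvdn_trans (dvdn_gcdl _ _)) ?dvdn_gcdr.
have lt_h : (h < g0)%N.
  rewrite ltn_neqAle dvdn_leq ?dvdn_gcdl ?gcdn_gt0 ?n_gt0 ?orbT // andbT.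
  by apply: contraNneq not_dvd => <-; rewrite dvdn_gcdr.
by rewrite -ltnS (leq_trans lt_h le_g).
Qed.

Section Generator.
Variable Q : Ore.
Hypothesis Q_centralizer : Q \in centralizer.
Hypothesis Q_neq0 : Q != 0.
Hypothesis Q_gcd : forall u, u \in centralizer -> u != 0 ->
  (gcdn (xdeg Q) n %| xdeg u)%N.

Inductive PQalg : Ore -> Prop :=
  | PQalgP : PQalg P
  | PQalgQ : PQalg Q
  | PQalg_scal c : PQalg (scal c)
  | PQalgD u v : PQalg u -> PQalg v -> PQalg (u + v)
  | PQalgM u v : PQalg u -> PQalg v -> PQalg (u * v).

Lemma PQalg0 : PQalg 0.
Proof. by rewrite -(rmorph0 scal); apply: PQalg_scal. Qed.

Lemma PQalgX u k : PQalg u -> PQalg (u ^+ k).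
Proof.
move=> Au; elim: k => [|k IH]; first by rewrite expr0 -(rmorph1 scal); apply: PQalg_scal.
by rewrite exprS; apply: PQalgM.
Qed.

Lemma PQalg_sum (I : finType) (F : I -> Ore) :
  (forall i, PQalg (F i)) -> PQalg (\sum_i F i).
Proof. by move=> AF; elim/big_ind: _ => //; [exact: PQalg0 | exact: PQalgD]. Qed.

Lemma PQalg_comm_gen z : GRing.comm z P -> GRing.comm z Q ->
  (forall c, GRing.comm z (scal c)) -> forall u, PQalg u -> GRing.comm z u.
Proof.
move=> zP zQ zK u; elim=> // [v w _ zv _ zw | v w _ zv _ zw].
  exact: commrD.
exact: commrM.
Qed.

Lemma PQalg_centralizer u : PQalg u -> u \in centralizer.
Proof.
move=> Au; rewrite inE; apply/eqP; apply: PQalg_comm_gen => //.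
  exact/eqP.
by move=> c; rewrite /GRing.comm scal_comm.
Qed.

Lemma PQalg_comm u v : PQalg u -> PQalg v -> GRing.comm u v.
Proof.
have scal_central c w : GRing.comm (scal c) w by rewrite /GRing.comm scal_comm.
have QP : GRing.comm Q P by apply/commr_sym/eqP.
move=> Au; apply: PQalg_comm_gen.
- exact: commr_sym (eqP (PQalg_centralizer Au)).
- apply/commr_sym/(PQalg_comm_gen QP (commr_refl Q) _ Au) => c.
  exact/commr_sym/scal_central.
- by move=> c; apply/commr_sym/scal_central.
Qed.

(* Every element of C_S(P) of x-degree at least n deg Q has the x-degree of a
   monomial Q^i P^j: solve i deg Q = deg u (mod n) with i < n. *)
Lemma PQ_monomial_xdeg u : u \in centralizer -> u != 0 -> (n * xdeg Q <= xdeg u)%N ->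
  exists i j, xdeg (Q ^+ i * P ^+ j) = xdeg u.
Proof.
move=> Cu u_neq0 le_u.
have [i0 Ei0] := linear_congruence_solvable (Q_gcd Cu u_neq0).
set i := (i0 %% n)%N.
have Ei : (i * xdeg Q = xdeg u %[mod n])%N by rewrite /i modnMml.
have le_i : (i * xdeg Q <= xdeg u)%N.
  by apply: leq_trans le_u; rewrite leq_mul2r ltnW ?ltn_pmod ?orbT.
have dvd_n : (n %| xdeg u - i * xdeg Q)%N by rewrite -eqn_mod_dvd // eq_sym Ei.
exists i, ((xdeg u - i * xdeg Q) %/ n)%N.
by rewrite xdegM ?expO_neq0 ?P_neq0 // !xdegX ?P_neq0 // divnK // subnKC.
Qed.

(* Modulo the algebra generated by P and Q, every element of C_S(P) reduces
   to x-size at most n deg Q, by repeatedly cancelling leading terms. *)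
Lemma reduce_modulo_PQalg u : u \in centralizer ->
  exists2 w, PQalg w & (xsize (u - w)%R <= n * xdeg Q)%N.
Proof.
move: {2}(xsize u) (leqnn (xsize u)) => N; elim: N u => [|N IH] u le_uN Cu.
  by exists 0; [exact: PQalg0 | rewrite subr0 (leq_trans le_uN)].
have [le_uB|lt_Bu] := leqP (xsize u) (n * xdeg Q).
  by exists 0; [exact: PQalg0 | rewrite subr0].
have u_neq0 : u != 0 by rewrite -xsize_eq0 -lt0n (leq_ltn_trans _ lt_Bu).
have le_Bu : (n * xdeg Q <= xdeg u)%N by rewrite -ltnS -xsizeE.
have [i [j Eij]] := PQ_monomial_xdeg Cu u_neq0 le_Bu.
set M := Q ^+ i * P ^+ j in Eij.
have M_neq0 : M != 0 by rewrite mulO_neq0 ?expO_neq0 ?P_neq0.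
have CM : M \in centralizer by rewrite rpredM ?rpredX ?centralizer_P.
have E_size : xsize u = xsize M by rewrite !xsizeE // Eij.
have [c lt_c] := centralizer_same_xsize n_gt0 Cu CM u_neq0 M_neq0 E_size.
have Cu' : u - scal c * M \in centralizer.
  by apply: rpredB => //; apply: rpredM => //; apply: centralizer_scal.
have [w Aw le_w] := IH _ (leq_trans lt_c le_uN) Cu'.
exists (scal c * M + w); last by rewrite opprD addrA.
apply: PQalgD => //; apply: PQalgM; first exact: PQalg_scal.
by apply: PQalgM; apply: PQalgX; [exact: PQalgQ | exact: PQalgP].
Qed.

Lemma centralizer_pivot B (I : finType) (j0 : I) (F : I -> Ore) :
  (forall i, F i \in centralizer) -> (forall i, (xsize (F i) <= B.+1)%N) ->
  exists j, forall l, exists c, (xsize (F l - scal c * F j)%R <= B)%N.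
Proof.
move=> CF le_F.
case: (pickP (fun j => xsize (F j) == B.+1)) => [j /eqP Fj | none].
  exists j => l; have := le_F l; rewrite leq_eqVlt => /orP [/eqP Fl | lt_l].
    have nz i : xsize (F i) = B.+1 -> F i != 0 by move=> Fi; rewrite -xsize_eq0 Fi.
    have [c lt_c] := centralizer_same_xsize n_gt0 (CF l) (CF j) (nz _ Fl) (nz _ Fj)
      (etrans Fl (esym Fj)).
    by exists c; rewrite -ltnS -Fl.
  by exists 0; rewrite rmorph0 mul0r subr0 -ltnS.
exists j0 => l; exists 0; rewrite rmorph0 mul0r subr0 -ltnS ltn_neqAle le_F andbT.
exact: negbT (none l).
Qed.

Lemma centralizer_dependent B (F : 'I_B.+1 -> Ore) :
  (forall i, F i \in centralizer) -> (forall i, (xsize (F i) <= B)%N) ->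
  exists c : 'I_B.+1 -> K, (exists i, c i != 0) /\ \sum_i scal (c i) * F i = 0.
Proof.
elim: B F => [|B IH] F CF le_F.
  exists (fun _ => 1); split; first by exists ord0; rewrite oner_eq0.
  apply: big1 => i _.
  suff -> : F i = 0 by rewrite mulr0.
  by apply/eqP; rewrite -xsize_eq0 -leqn0.
have [j pivot] := centralizer_pivot ord0 CF le_F.
have [e le_e] := fin_all_exists pivot.
pose F' i := F (lift j i) - scal (e (lift j i)) * F j.
have CF' i : F' i \in centralizer.
  by apply: rpredB => //; apply: rpredM => //; apply: centralizer_scal.
have [c' [[i0 c'_neq0] sum_c']] := IH F' CF' (fun i => le_e (lift j i)).
pose c l := if unlift j l is Some i then c' i else - \sum_i c' i * e (lift j i).
exists c; split; first by exists (lift j i0); rewrite /c liftK.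
rewrite (bigD1_ord j) //= /c unlift_none.
under eq_bigr => i _ do rewrite liftK.
rewrite -[RHS]sum_c' /F'; under [in RHS]eq_bigr => i _ do rewrite mulrBr mulrA -rmorphM.
by rewrite sumrB rmorphN rmorph_sum mulNr mulr_suml addrC.
Qed.

Definition P_poly N (c : nat -> K) : Ore := \sum_(i < N) scal (c i) * P ^+ i.

Lemma xsize_P_poly N c : (xsize (P_poly N c) <= N.-1 * n + 1)%N.
Proof.
elim: N => [|N IH]; first by rewrite /P_poly big_ord0 /xsize size_poly0.
rewrite /P_poly big_ord_recr /=; apply: leq_trans (size_polyD _ _) _.
rewrite geq_max; apply/andP; split.
  by apply: leq_trans IH _; rewrite leq_add2r leq_mul2r leq_pred orbT.
rewrite scal_mull (leq_trans (size_scale_leq _ _)) // -/(xsize _).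
by rewrite xsizeE ?expO_neq0 ?P_neq0 // xdegX ?P_neq0 // addn1.
Qed.

(* The powers of P have distinct x-degrees, so a nonzero coefficient
   sequence gives a nonzero polynomial in P. *)
Lemma P_poly_neq0 N c : (exists2 i, (i < N)%N & c i != 0) -> P_poly N c != 0.
Proof.
elim: N => [|N IH] [i lt_i c_neq0] //; rewrite /P_poly big_ord_recr /=.
have [cN0|cN_neq0] := eqVneq (c N) 0.
  rewrite cN0 rmorph0 mul0r addr0; apply: IH; exists i => //.
  move: lt_i; rewrite ltnS leq_eqVlt => /orP [/eqP Ei|//].
  by move: c_neq0; rewrite Ei cN0 eqxx.
have xsize_top : xsize (scal (c N) * P ^+ N) = (N * n).+1.
  by rewrite xsize_scal // xsizeE ?expO_neq0 ?P_neq0 // xdegX ?P_neq0.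
have lt_low : (xsize (P_poly N c) < (N * n).+1)%N.
  move: (xsize_P_poly N c); case: (N) => [_|m].
    by rewrite /P_poly big_ord0 /xsize size_poly0.
  by move/leq_ltn_trans; apply; rewrite addn1 ltnS ltn_mul2r n_gt0 ltnSn.
change (P_poly N c + scal (c N) * P ^+ N != 0).
by rewrite -xsize_eq0 addrC xsizeDl ?xsize_top.
Qed.

Lemma P_poly_centralizer N c : P_poly N c \in centralizer.
Proof.
apply: rpred_sum => i _; apply: rpredM; first exact: centralizer_scal.
by apply: rpredX; apply: centralizer_P.
Qed.

Lemma P_poly_comm N c v : v \in centralizer -> GRing.comm (P_poly N c) v.
Proof.
move=> /eqP Pv; apply/commr_sym/commr_sum => i _; apply: commrM.
  by rewrite /GRing.comm scal_comm.
exact/commrX/commr_sym.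
Qed.

(* Every u in C_S(P) is brought into the algebra generated by P and Q by a
   nonzero polynomial f in P: reduce P^i u for i <= n deg Q and use the
   linear dependence of the remainders. *)
Lemma centralizer_multiplier u : u \in centralizer ->
  exists N c, P_poly N c != 0 /\ PQalg (P_poly N c * u).
Proof.
move=> Cu; set B := (n * xdeg Q)%N.
have reduce_Pu (i : 'I_B.+1) :
    exists w, PQalg w /\ (xsize (P ^+ i * u - w)%R <= B)%N.
  have CPu : P ^+ i * u \in centralizer.
    by apply: rpredM => //; apply: rpredX; apply: centralizer_P.
  by have [w Aw le_w] := reduce_modulo_PQalg CPu; exists w.
have [w Pw] := fin_all_exists reduce_Pu.
pose F (i : 'I_B.+1) := P ^+ i * u - w i.
have CF i : F i \in centralizer.
  apply: rpredB; last by apply: PQalg_centralizer; case: (Pw i).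
  by apply: rpredM => //; apply: rpredX; apply: centralizer_P.
have [c [[i0 c_neq0] sum_c]] := centralizer_dependent CF (fun i => proj2 (Pw i)).
pose c' k := c (inord k).
have def_f : P_poly B.+1 c' = \sum_i scal (c i) * P ^+ i.
  by apply: eq_bigr => i _; rewrite /c' inord_val.
exists B.+1, c'; split.
  by apply: P_poly_neq0; exists i0 => //; rewrite /c' inord_val.
have -> : P_poly B.+1 c' * u = \sum_i scal (c i) * w i.
  rewrite def_f mulr_suml; transitivity (\sum_i scal (c i) * (F i + w i)).
    by apply: eq_bigr => i _; rewrite /F subrK mulrA.
  by under eq_bigr => i _ do rewrite mulrDr; rewrite big_split /= sum_c add0r.
by apply: PQalg_sum => i; apply: PQalgM; [apply: PQalg_scal | case: (Pw i)].
Qed.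

End Generator.

(* For n > 0 the centralizer is commutative: multiplying u v - v u by nonzero
   polynomials f1, f2 in P gives (f1 u)(f2 v) - (f2 v)(f1 u) = 0, computed in
   the commutative algebra generated by P and Q, and S is a domain. *)
Lemma centralizer_comm_pos u v : u \in centralizer -> v \in centralizer ->
  u * v = v * u.
Proof.
move=> Cu Cv; have [Q [CQ Q_neq0] Q_gcd] := degree_gcd_generator.
have [N1 [c1 [f1_neq0 Af1u]]] := centralizer_multiplier CQ Q_neq0 Q_gcd Cu.
have [N2 [c2 [f2_neq0 Af2v]]] := centralizer_multiplier CQ Q_neq0 Q_gcd Cv.
set f1 := P_poly N1 c1 in f1_neq0 Af1u; set f2 := P_poly N2 c2 in f2_neq0 Af2v.
have f12 : GRing.comm f1 f2 by apply: P_poly_comm; apply: P_poly_centralizer.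
have f1v : GRing.comm f1 v by apply: P_poly_comm.
have f2u : GRing.comm f2 u by apply: P_poly_comm.
have E_uv : f1 * f2 * (u * v) = f1 * u * (f2 * v).
  by rewrite -!mulrA; congr (_ * _); rewrite !mulrA f2u.
have E_vu : f1 * f2 * (v * u) = f2 * v * (f1 * u).
  by rewrite f12 -!mulrA; congr (_ * _); rewrite !mulrA f1v.
have comm_killed : f1 * f2 * (u * v - v * u) = 0.
  by rewrite mulrBr E_uv E_vu (PQalg_comm CQ Af1u Af2v) subrr.
apply/eqP; rewrite -subr_eq0; apply/negPn/negP => comm_neq0.
by move: (mulO_neq0 (mulO_neq0 f1_neq0 f2_neq0) comm_neq0); rewrite comm_killed eqxx.
Qed.

End PositiveDegree.

Lemma centralizer_comm u v : u \in centralizer -> v \in centralizer ->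
  u * v = v * u.
Proof.
case: (posnP n) => [n0|n_gt0]; first exact: centralizer_comm_xdeg0.
exact: centralizer_comm_pos.
Qed.

End Centralizer.

Unset Implicit Arguments.

Theorem theorem4p1 (K : fieldType)
    (sigma : {lrmorphism {poly K} -> {poly K}})
    (delta : {linear {poly K} -> {poly K}})
    (Hdeg : (2 < size (sigma 'X))%N)
    (Hder : forall a b : {poly K}, delta (a * b) = sigma a * delta b + delta a * b)
    (P : {poly {poly K}})
    (HP : forall c : K, P != (c%:P)%:P) :
  {in ore_centralizer sigma delta P &,
    forall Q1 Q2, ore_mul sigma delta Q1 Q2 = ore_mul sigma delta Q2 Q1}.
Proof.
move=> Q1 Q2 CQ1 CQ2.
exact: (centralizer_comm Hdeg (P := P : ore_ring Hder) HP CQ1 CQ2).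
Qed.
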